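(* Let $q$ be a prime power and $k,m,n,h,r$ positive integers. If $U$ is an $(h,r)_q$-evasive $[n,k]_{q^m/q}$ system with $r<hm$, then $U$ is $(2h,\,r+hm-1)_q$-evasive, i.e. every $\mathbb F_{q^m}$-subspace $H$ of $\mathbb F_{q^m}^k$ with $\dim_{\mathbb F_{q^m}}(H)=2h$ satisfies $\dim_{\mathbb F_q}(U\cap H)\le r+hm-1$.
   Context: An $[n,k]_{q^m/q}$ system is an $\mathbb F_q$-subspace $U$ of $\mathbb F_{q^m}^k$ with $\dim_{\mathbb F_q}(U)=n$ and $\langle U\rangle_{\mathbb F_{q^m}}=\mathbb F_{q^m}^k$. For positive integers $h<k$ and $r$, $U$ is called $(h,r)_q$-evasive if $\dim_{\mathbb F_q}(U\cap H)\le r$ for every $\mathbb F_{q^m}$-subspace $H$ of $\mathbb F_{q^m}^k$ with $\dim_{\mathbb F_{q^m}}(H)=h$. *)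

From HB Require Import structures.
From mathcomp Require Import all_boot all_order all_algebra all_field.
Set Implicit Arguments. Unset Strict Implicit. Unset Printing Implicit Defensive.
Import GRing.Theory.
Local Open Scope ring_scope.

(* F = F_q (a finite field), L = F_{q^m} (an extension of F of degree m).
   The ambient space F_{q^m}^k is modelled as V := {ffun 'I_k -> L}, which is
   canonically an F-vector space (vectType F); F_q-subspaces are {vspace V}. *)

Section Defs.
Variables (F : finFieldType) (L : fieldExtType F) (k : nat).
Notation V := {ffun 'I_k -> L}.

Definition vec (v : V) : 'rV[L]_k := \row_i v i.

Definition is_Lsubspace (W : {vspace V}) : Prop :=
  forall (a : L) (v : V), v \in W -> [ffun i => a * v i] \in W.

(* matrix whose rows are an F-basis of W; its L-row space is <W>_{F_{q^m}} *)
Definition Lspan_mx (W : {vspace V}) : 'M[L]_(\dim W, k) :=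
  \matrix_(j < \dim W) vec (tnth (vbasis W) j).

Definition dimL (W : {vspace V}) : nat := \rank (Lspan_mx W).

Definition is_system (n : nat) (U : {vspace V}) : Prop :=
  \dim U = n /\ dimL U = k.

Definition evasive (h r : nat) (U : {vspace V}) : Prop :=
  (0 < h)%N /\ (h < k)%N /\ (0 < r)%N /\
  forall H : {vspace V}, is_Lsubspace H -> dimL H = h ->
    (\dim (U :&: H) <= r)%N.
End Defs.

From HB Require Import structures.
From mathcomp Require Import all_boot all_order all_algebra all_field.
From mathcomp Require Import zify.
Set Implicit Arguments. Unset Strict Implicit. Unset Printing Implicit Defensive.
Import GRing.Theory.
Local Open Scope ring_scope.

(* Write m = [F_{q^m} : F_q].  The F_q-subspace U ∩ H cannot be all of H: an
   h-dimensional F_{q^m}-subspace of H would then meet U in hm > r dimensions.  So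
   U ∩ H lies in an F_q-hyperplane S of H, which we take of the form
   S = {v ∈ H | φ(⟨v, a⟩) = 0} for a fixed nonzero F_q-linear form φ on F_{q^m}.
   A suitable a, vanishing against U ∩ H under φ(⟨-, -⟩) but not F_{q^m}-orthogonal
   to H, exists by counting: the first condition leaves an F_q-space of dimension
   at least km - dim(U ∩ H) > (k - 2h)m = dim H^⊥.  Now S contains the
   F_{q^m}-subspace H ∩ a^⊥, of dimension at least 2h - 1 ≥ h, hence an
   h-dimensional H1, and Grassmann's formula inside S gives
   r ≥ dim(U ∩ H1) ≥ dim(U ∩ H) + hm - (2hm - 1). *)

Section RowSpaces.
Variables (F : finFieldType) (L : fieldExtType F).

Lemma dim_ffun n : \dim {:{ffun 'I_n -> L}} = (n * \dim {:L})%N.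
Proof. by rewrite dimvf /dim /= card_ord dimvf. Qed.

Lemma vec_inj n : injective (@vec F L n).
Proof. by move=> u v /rowP eq_uv; apply/ffunP=> i; have := eq_uv i; rewrite !mxE. Qed.

Lemma vec_ffun n (r : 'rV[L]_n) : vec [ffun i => r 0 i] = r.
Proof. by apply/rowP=> i; rewrite !mxE ffunE. Qed.

Lemma vecD n (u v : {ffun 'I_n -> L}) : vec (u + v) = vec u + vec v.
Proof. by apply/rowP=> i; rewrite !mxE ffunE. Qed.

Lemma vecZ n (c : F) (v : {ffun 'I_n -> L}) : vec (c *: v) = c%:A *: vec v.
Proof. by apply/rowP=> i; rewrite !mxE ffunE mulr_algl. Qed.

Lemma vec_sum n I (r : seq I) (P : pred I) (f : I -> {ffun 'I_n -> L}) :
  vec (\sum_(j <- r | P j) f j) = \sum_(j <- r | P j) vec (f j).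
Proof.
by apply/rowP=> i; rewrite !mxE sum_ffunE summxE; apply: eq_bigr => j _; rewrite mxE.
Qed.

Definition mxfun n p (M : 'M[L]_(n, p)) (v : {ffun 'I_n -> L}) : {ffun 'I_p -> L} :=
  [ffun j => (vec v *m M) 0 j].

Lemma vec_mxfun n p (M : 'M[L]_(n, p)) v : vec (mxfun M v) = vec v *m M.
Proof. exact: vec_ffun. Qed.

Fact mxfun_is_linear n p (M : 'M[L]_(n, p)) : linear (mxfun M).
Proof.
by move=> c u v; apply: vec_inj; rewrite vecD vecZ !vec_mxfun vecD vecZ mulmxDl scalemxAl.
Qed.
HB.instance Definition _ n p (M : 'M[L]_(n, p)) :=
  GRing.isLinear.Build F _ _ _ (mxfun M) (mxfun_is_linear M).

Definition rowvs n p (A : 'M[L]_(p, n)) : {vspace {ffun 'I_n -> L}} :=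
  limg (linfun (mxfun (row_base A))).

Lemma mem_rowvs n p (A : 'M[L]_(p, n)) v : (v \in rowvs A) = (vec v <= A)%MS.
Proof.
rewrite -(eq_row_base A); apply/memv_imgP/idP => [[c _ ->]|vA].
  by rewrite lfunE /= vec_mxfun submxMl.
exists (mxfun (pinvmx (row_base A)) v); first exact: memvf.
by apply: vec_inj; rewrite lfunE /= !vec_mxfun mulmxKpV.
Qed.

Lemma rowvs_sub n p q (A : 'M[L]_(p, n)) (B : 'M[L]_(q, n)) :
  (rowvs A <= rowvs B)%VS = (A <= B)%MS.
Proof.
apply/subvP/idP => [sAB | sAB v]; last by rewrite !mem_rowvs => /submx_trans; apply.
by apply/row_subP=> i; rewrite -[row i A]vec_ffun -mem_rowvs sAB // mem_rowvs vec_ffun row_sub.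
Qed.

Lemma rowvs_Lsubspace n p (A : 'M[L]_(p, n)) : is_Lsubspace (rowvs A).
Proof.
move=> a v; rewrite !mem_rowvs => vA.
by rewrite (_ : vec _ = a *: vec v) ?scalemx_sub //; apply/rowP=> i; rewrite !mxE ffunE.
Qed.

Lemma dim_rowvs n p (A : 'M[L]_(p, n)) : \dim (rowvs A) = (\rank A * \dim {:L})%N.
Proof.
rewrite limg_dim_eq ?dim_ffun //; apply/eqP; rewrite capfv.
apply/lker0P => u v; rewrite !lfunE /= => eq_uv; apply: vec_inj.
by apply: (row_free_inj (row_base_free A)); rewrite -!vec_mxfun eq_uv.
Qed.

Lemma vec_sub_Lspan n (W : {vspace {ffun 'I_n -> L}}) v :
  v \in W -> (vec v <= Lspan_mx W)%MS.
Proof.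
move=> vW; rewrite (coord_vbasis vW) vec_sum; apply: summx_sub => j _.
by rewrite vecZ scalemx_sub // (_ : vec _ = row j (Lspan_mx W)) ?row_sub // rowK -tnth_nth.
Qed.

Lemma Lspan_rowvs n (W : {vspace {ffun 'I_n -> L}}) :
  is_Lsubspace W -> rowvs (Lspan_mx W) = W.
Proof.
move=> LW; apply/vspaceP=> v; rewrite mem_rowvs.
apply/idP/idP => [/submxP[c ec] | /vec_sub_Lspan //].
have -> : v = \sum_j [ffun i => c 0 j * tnth (vbasis W) j i].
  apply: vec_inj; rewrite ec vec_sum mulmx_sum_row; apply: eq_bigr => j _.
  by apply/rowP=> i; rewrite !mxE ffunE.
by apply: rpred_sum => j _; apply: LW; apply: vbasis_mem (mem_tnth _ _).
Qed.

Lemma dimL_rowvs n p (A : 'M[L]_(p, n)) : dimL (rowvs A) = \rank A.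
Proof.
apply/eqmx_rank; have eqA := Lspan_rowvs (rowvs_Lsubspace (A := A)).
by apply/andP; split; rewrite -rowvs_sub eqA.
Qed.

Lemma dimL_le n (W : {vspace {ffun 'I_n -> L}}) : (dimL W <= n)%N.
Proof. exact: rank_leq_col. Qed.

Lemma dim_Lsubspace n (W : {vspace {ffun 'I_n -> L}}) :
  is_Lsubspace W -> \dim W = (dimL W * \dim {:L})%N.
Proof. by move=> LW; rewrite -{1}(Lspan_rowvs LW) dim_rowvs. Qed.

Lemma exists_sub_Lsubspace n p (A : 'M[L]_(p, n)) h : (h <= \rank A)%N ->
  exists H, [/\ is_Lsubspace H, dimL H = h & (H <= rowvs A)%VS].
Proof.
move=> le_hA; pose C := (pid_mx h : 'M_(h, \rank A)) *m row_base A.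
exists (rowvs C); split; first exact: rowvs_Lsubspace.
  by rewrite dimL_rowvs mxrankMfree ?row_base_free // rank_pid_mx.
by rewrite rowvs_sub (submx_trans (submxMl _ _)) ?eq_row_base.
Qed.

Lemma exists_functional_neq0 : exists (phi : {linear L -> F^o}) (x : L), phi x != 0.
Proof.
have i0 : 'I_(\dim (fullv : {vspace L})) := Ordinal (adim_gt0 {:L}%AS).
exists (coord (vbasis fullv) i0), (vbasis fullv)`_i0.
have := coord_free i0 i0 (basis_free (vbasisP fullv)).
by rewrite eqxx => /= ->; apply: oner_neq0.
Qed.

End RowSpaces.

Section Duality.
Variables (F : finFieldType) (L : fieldExtType F) (k : nat).
Local Notation V := {ffun 'I_k -> L}.

Definition dotv (u v : V) : L := \sum_i u i * v i.

Lemma dotvC u v : dotv u v = dotv v u.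
Proof. by apply: eq_bigr => i _; rewrite mulrC. Qed.

Lemma dotv_mx u v : dotv u v = (vec u *m (vec v)^T) 0 0.
Proof. by rewrite mxE; apply: eq_bigr => i _; rewrite !mxE. Qed.

Lemma dotvP (c : F) (u w v : V) : dotv (c *: u + w) v = c *: dotv u v + dotv w v.
Proof.
rewrite /dotv scaler_sumr -big_split; apply: eq_bigr => i _.
by rewrite !ffunE mulrDl scalerAl.
Qed.

Lemma dotvMl (a : L) (u v : V) : dotv [ffun i => a * u i] v = a * dotv u v.
Proof. by rewrite /dotv mulr_sumr; apply: eq_bigr => i _; rewrite ffunE mulrA. Qed.

Definition Lannihilator (H : {vspace V}) : {vspace V} := rowvs (kermx (Lspan_mx H)^T).

Lemma dim_Lannihilator H : \dim (Lannihilator H) = ((k - dimL H) * \dim {:L})%N.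
Proof. by rewrite dim_rowvs mxrank_ker mxrank_tr. Qed.

Lemma dotv_neq0_notin_Lannihilator (H : {vspace V}) a :
  a \notin Lannihilator H -> exists2 v, v \in H & dotv v a != 0.
Proof.
rewrite mem_rowvs sub_kermx => aB_neq0.
have [j aj_neq0] : exists j, (vec a *m (Lspan_mx H)^T) 0 j != 0.
  apply/existsP; apply: contraR aB_neq0 => /existsPn aB0.
  by apply/eqP/rowP=> j; rewrite [RHS]mxE; apply/eqP/negbNE/aB0.
exists (tnth (vbasis H) j); first exact: vbasis_mem (mem_tnth _ _).
suff -> : dotv (tnth (vbasis H) j) a = (vec a *m (Lspan_mx H)^T) 0 j by [].
by rewrite dotvC mxE; apply: eq_bigr => i _; rewrite !mxE.
Qed.

Variable phi : {linear L -> F^o}.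

Definition phidot (a u : V) : F^o := phi (dotv u a).

Fact phidot_is_linear a : linear (phidot a).
Proof. by move=> c u w; rewrite /phidot dotvP linearP. Qed.
HB.instance Definition _ a :=
  GRing.isLinear.Build F _ _ _ (phidot a) (phidot_is_linear a).

Definition orth_map (W : {vspace V}) (a : V) : {ffun 'I_(\dim W) -> F^o} :=
  [ffun j => phidot a (tnth (vbasis W) j)].

Fact orth_map_is_linear W : linear (orth_map W).
Proof.
move=> c a b; apply/ffunP=> j; rewrite !ffunE /phidot.
by rewrite ![dotv (tnth _ j) _]dotvC dotvP linearP.
Qed.
HB.instance Definition _ W :=
  GRing.isLinear.Build F _ _ _ (orth_map W) (orth_map_is_linear W).

Definition orthv (W : {vspace V}) : {vspace V} := lker (linfun (orth_map W)).

Lemma orthv_sub_ker W a : a \in orthv W -> (W <= lker (linfun (phidot a)))%VS.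
Proof.
rewrite memv_ker lfunE /= => /eqP orth_a; rewrite -(span_basis (vbasisP W)).
apply/span_subvP => _ /tnthP[j ->]; rewrite memv_ker lfunE /=.
by have /ffunP/(_ j) := orth_a; rewrite !ffunE => ->.
Qed.

Lemma dim_orthv W : (k * \dim {:L} - \dim W <= \dim (orthv W))%N.
Proof.
have := limg_ker_dim (linfun (orth_map W)) fullv; rewrite capfv dim_ffun.
have : (\dim (limg (linfun (orth_map W))) <= \dim W)%N.
  by rewrite (leq_trans (dimvS (subvf _))) // dimvf /dim /= card_ord muln1.
by move=> le_img <-; rewrite leq_subLR addnC leq_add2r.
Qed.

Lemma exists_orthv_notin_Lannihilator (W H : {vspace V}) :
  is_Lsubspace H -> (\dim W < \dim H)%N ->
  exists2 a, a \in orthv W & a \notin Lannihilator H.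
Proof.
move=> LH ltWH; apply/subvPn/negP => /dimvS; rewrite dim_Lannihilator mulnBl.
have := dim_orthv W; rewrite (dim_Lsubspace LH) in ltWH.
have : (dimL H * \dim {:L} <= k * \dim {:L})%N by rewrite leq_mul2r dimL_le orbT.
lia.
Qed.

Lemma phidot_neq0_notin_Lannihilator (H : {vspace V}) a x :
  is_Lsubspace H -> phi x != 0 -> a \notin Lannihilator H ->
  exists2 v, v \in H & phidot a v != 0.
Proof.
move=> LH phi_x /dotv_neq0_notin_Lannihilator[v vH va_neq0].
by exists [ffun i => x / dotv v a * v i]; [apply: LH | rewrite /phidot dotvMl mulfVK].
Qed.

End Duality.

Lemma exists_Lsubspace_in_hyperplane (F : finFieldType) (L : fieldExtType F) k
    (W H : {vspace {ffun 'I_k -> L}}) h :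
  is_Lsubspace H -> (W <= H)%VS -> (\dim W < \dim H)%N -> (h < dimL H)%N ->
  exists H1, [/\ is_Lsubspace H1, dimL H1 = h, (H1 <= H)%VS
                & (\dim (W + H1) < \dim H)%N].
Proof.
move=> LH sWH ltWH lthH.
have [phi [x phi_x]] := exists_functional_neq0 L.
have [a aW aN] := exists_orthv_notin_Lannihilator phi LH ltWH.
have [v vH va_neq0] := phidot_neq0_notin_Lannihilator LH phi_x aN.
set S := (H :&: lker (linfun (phidot phi a)))%VS.
have ltSH : (\dim S < \dim H)%N.
  rewrite (ltn_leqif (dimv_leqif_eq (capvSl _ _))); apply: (contraNneq _ va_neq0) => eqSH.
  by move: vH; rewrite -eqSH memv_cap memv_ker lfunE => /andP[].
set D := (Lspan_mx H :&: kermx (vec a)^T)%MS.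
have [|H1 [LH1 dH1 sH1D]] := exists_sub_Lsubspace (A := D) (h := h).
  have := mxrank_sum_cap (Lspan_mx H) (kermx (vec a)^T); rewrite mxrank_ker.
  have := rank_leq_col (vec a)^T; have := rank_leq_col (Lspan_mx H + kermx (vec a)^T)%MS.
  rewrite /dimL -/D in lthH *; lia.
have sH1H : (H1 <= H)%VS.
  by rewrite (subv_trans sH1D) // -{1}(Lspan_rowvs LH) rowvs_sub capmxSl.
exists H1; split=> //; apply: leq_ltn_trans ltSH; apply: dimvS.
rewrite subv_add !subv_cap sWH sH1H orthv_sub_ker //=.
apply/subvP=> u /(subvP sH1D); rewrite mem_rowvs sub_capmx sub_kermx => /andP[_ /eqP ua0].
by rewrite memv_ker lfunE /= /phidot dotv_mx ua0 mxE linear0.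
Qed.

Lemma evasive_Lsubspace_not_sub (F : finFieldType) (L : fieldExtType F) k h r
    (U H : {vspace {ffun 'I_k -> L}}) :
  evasive h r U -> (r < h * \dim {:L})%N -> is_Lsubspace H -> (h <= dimL H)%N ->
  ~~ (H <= U)%VS.
Proof.
move=> [_ [_ [_ evU]]] ltr LH le_hH; apply/negP => sHU.
have [H1 [LH1 dH1 sH1H]] := exists_sub_Lsubspace le_hH.
rewrite Lspan_rowvs // in sH1H.
have := evU H1 LH1 dH1; rewrite (capv_idPr (subv_trans sH1H sHU)).
by rewrite (dim_Lsubspace LH1) dH1 leqNgt ltr.
Qed.

Theorem proposition3p2 (F : finFieldType) (L : fieldExtType F)
  (k m n h r : nat) (U : {vspace {ffun 'I_k -> L}}) :
  \dim {:L} = m ->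
  (0 < k)%N -> (0 < m)%N -> (0 < n)%N -> (0 < h)%N -> (0 < r)%N ->
  is_system n U ->
  evasive h r U ->
  (r < h * m)%N ->
  forall H : {vspace {ffun 'I_k -> L}},
    is_Lsubspace H -> dimL H = (2 * h)%N ->
    (\dim (U :&: H) <= r + h * m - 1)%N.
Proof.
move=> dimLm _ _ _ h_gt0 _ _ evU ltrhm H LH dH.
(* [dimLm] is stated at a structure projection convertible to [nat], so [rewrite] cannot use it as is. *)
have {}dimLm : \dim (fullv : {vspace L}) = m := dimLm.
rewrite -{}dimLm in ltrhm *.
have ltUH : (\dim (U :&: H) < \dim H)%N.
  rewrite (ltn_leqif (dimv_leqif_eq (capvSr _ _))).
  apply: contraNneq (evasive_Lsubspace_not_sub evU ltrhm LH _) => [<-|]; first exact: capvSl.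
  by rewrite dH leq_pmull.
have [|H1 [LH1 dH1 _ ltUH1]] := exists_Lsubspace_in_hyperplane (h := h) LH (capvSr U H) ltUH.
  by rewrite dH; lia.
have [_ [_ [_ /(_ H1 LH1 dH1) le_UH1r]]] := evU.
have := dimv_sum_cap (U :&: H) H1.
have : (\dim (U :&: H :&: H1) <= \dim (U :&: H1))%N by rewrite dimvS // capvS ?capvSl.
rewrite (dim_Lsubspace LH) (dim_Lsubspace LH1) dH dH1 in ltUH1 *; lia.
Qed.
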